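(* Let $\phi:\mathbb{R}\to\mathbb{R}$ be a differentiable elementwise nonlinearity with $\frac{\phi(z)}{\phi'(z)}<\infty$ for all $z$. Let $x^{(1)},\dots,x^{(n)}\in\mathbb{R}^{k_0}$ with $\|x^{(i)}\|_2=1$ for all $i$. For each $i\in[n]$ let $f_i(z)=W_1^{(i)}\phi(W_2^{(i)}z)$ be a 1-hidden-layer network of width $k$, initialized with $W_1^{(i),(0)}=x^{((i\bmod n)+1)}{u^{(i),(0)}}^T$, $W_2^{(i),(0)}=v^{(i),(0)}{x^{(i)}}^T$ where $u^{(i),(0)},v^{(i),(0)}\in\mathbb{R}^k$ each have all entries equal, and trained by gradient descent with learning rate $\gamma\to0$ on $\frac12\|x^{((i\bmod n)+1)}-f_i(x^{(i)})\|_2^2$, so that after training $f_i(z)=x^{((i\bmod n)+1)}{u^{(i)}}^T\phi(v^{(i)}{x^{(i)}}^Tz)$ with $u^{(i)},v^{(i)}\in\mathbb{R}^k$ having all entries equal, $u^{(i)}_j\phi(v^{(i)}_j)=1/k$, and $\frac{(u^{(i)}_j)^2-(u^{(i),(0)}_j)^2}{2}=\int_{v^{(i),(0)}_j}^{v^{(i)}_j}\frac{\phi(z)}{\phi'(z)}dz$. Then the composition $f=f_n\circ f_{n-1}\circ\cdots\circ f_1$ satisfies $$\lambda_1(\mathbf{J}(f(x^{(1)})))=\prod_{i=1}^n\frac{\phi'(v_j^{(i)})v_j^{(i)}}{\phi(v_j^{(i)})}$$ (for any $j\in[k]$).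
   Context: $\phi$ is applied coordinatewise. $\mathbf{J}(f(x^{(1)}))$ denotes the Jacobian of $f$ at $x^{(1)}$ and $\lambda_1$ its top eigenvalue (eigenvalue of largest absolute value). Gradient descent with learning rate $\gamma$ updates each weight matrix by $W\leftarrow W-\gamma\nabla_W\mathcal{L}$; trained weights are those at the end of training in the limit $\gamma\to0$ (gradient flow). *)

From Stdlib Require Import Reals.
From Coquelicot Require Import Coquelicot.
From mathcomp Require Import all_boot all_order all_algebra.
From mathcomp Require Import Rstruct complex.
Set Implicit Arguments. Unset Strict Implicit. Unset Printing Implicit Defensive.
Import Order.TTheory GRing.Theory Num.Theory.
Local Open Scope ring_scope.
Local Open Scope complex_scope.

Definition deriv1 (g : R -> R) : R -> R := fun z => Derive g z.

Definition norm2 (k0 : nat) (x : 'cV[R]_k0) : R :=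
  Num.sqrt (\sum_(a < k0) x a 0 ^+ 2).

(* The one-hidden-layer network z |-> x_next u^T phi(v x_i^T z),
   phi applied coordinatewise; u, v in R^k. *)
Definition net (phi : R -> R) (k0 k : nat) (x_next x_cur : 'cV[R]_k0)
  (u v : 'cV[R]_k) (z : 'cV[R]_k0) : 'cV[R]_k0 :=
  (\sum_(j < k) u j 0 * phi (v j 0 * (x_cur^T *m z) 0 0)) *: x_next.

(* Composition f_{n-1} o ... o f_0 (0-based indices). *)
Definition compose_nets (k0 n : nat) (f : 'I_n -> 'cV[R]_k0 -> 'cV[R]_k0)
  (z : 'cV[R]_k0) : 'cV[R]_k0 :=
  foldl (fun w i => f i w) z (enum 'I_n).

Definition jacobian (k0 : nat) (F : 'cV[R]_k0 -> 'cV[R]_k0) (x : 'cV[R]_k0)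
  : 'M[R]_k0 :=
  \matrix_(a, b) Derive (fun t : R => F (x + t *: delta_mx b 0) a 0) 0%R.

Definition is_top_eigenvalue (k0 : nat) (A : 'M[R]_k0) (lam : R) : Prop :=
  let AC := map_mx (fun r : R => r%:C) A in
  eigenvalue AC lam%:C /\ forall z : R[i], eigenvalue AC z -> `|z| <= `|lam%:C|.

Definition all_equal (k : nat) (u : 'cV[R]_k) : Prop :=
  forall j j' : 'I_k, u j 0 = u j' 0.

From Stdlib Require Import Reals.
From Coquelicot Require Import Coquelicot.
From mathcomp Require Import all_boot all_order all_algebra.
From mathcomp Require Import Rstruct complex.
Import Order.TTheory GRing.Theory Num.Theory.
Local Open Scope ring_scope.

(* Each trained block is the rank-one map z |-> g_i(<x_i, z>) x_{i+1}, with scalar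
   gain g_i(t) = k u_j phi(v_j t).  Since the inputs are unit vectors, the chain
   closes up: f(z) = K(<x_1, z>) x_1 with K = g_n o ... o g_1.  The training
   condition u_j phi(v_j) = 1/k says g_i(1) = 1, so 1 is a common fixed point and
   the chain rule gives K'(1) = prod_i g_i'(1) = prod_i phi'(v_j) v_j / phi(v_j).
   Hence J f(x_1) = K'(1) x_1 x_1^T, a rank-one matrix whose only nonzero
   eigenvalue is K'(1). *)

Lemma eigenvalue_scale_rank1 (F : fieldType) m (y : 'cV[F]_m) (lam : F) :
  y^T *m y = 1%:M -> eigenvalue (lam *: (y *m y^T)) lam.
Proof.
move=> yTy; apply/eigenvalueP; exists y^T.
  by rewrite -scalemxAr mulmxA yTy mul1mx.
apply/eqP => yT0; move: yTy; rewrite yT0 mul0mx => /matrixP/(_ 0 0).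
by rewrite !mxE /= => /esym/eqP; rewrite oner_eq0.
Qed.

Lemma eigenvalue_scale_rank1P {F : fieldType} {m} {y : 'cV[F]_m} {lam z : F} :
  y^T *m y = 1%:M -> eigenvalue (lam *: (y *m y^T)) z -> z = 0 \/ z = lam.
Proof.
move=> yTy /eigenvalueP[w wA w_neq0].
have [->|z_neq0] := eqVneq z 0; [by left | right].
have zw : z *: w = lam *: (w *m y *m y^T) by rewrite -wA -scalemxAr mulmxA.
have wy_neq0 : w *m y != 0.
  apply: contra_neq w_neq0 => wy0.
  apply/eqP; move: zw; rewrite wy0 mul0mx scaler0 => /eqP.
  by rewrite scalemx_eq0 (negPf z_neq0).
have /eqP : z *: (w *m y) = lam *: (w *m y).
  by rewrite scalemxAl zw -scalemxAl -mulmxA yTy mulmx1.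
by rewrite -subr_eq0 -scalerBl scalemx_eq0 (negPf wy_neq0) orbF subr_eq0 => /eqP.
Qed.

Lemma is_top_eigenvalue_scale_rank1 m (y : 'cV[R]_m) (lam : R) :
  y^T *m y = 1%:M -> is_top_eigenvalue (lam *: (y *m y^T)) lam.
Proof.
move=> yTy; rewrite /is_top_eigenvalue.
set Y := map_mx (real_complex R) y.
have YTY : Y^T *m Y = 1%:M by rewrite /Y map_trmx -map_mxM yTy map_mx1.
rewrite (map_mxZ (real_complex R)) map_mxM -map_trmx -/Y; split.
  exact: eigenvalue_scale_rank1.
by move=> z /(eigenvalue_scale_rank1P YTY) [->|->]; rewrite ?normr0.
Qed.

Lemma is_derive_comp_affine {K : R -> R} {c b t d : R} :
  is_derive K (c + t * b) d -> is_derive (fun s : R => K (c + s * b)) t (d * b).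
Proof.
move=> dK.
have daff : is_derive (fun s : R => Rplus c (Rmult s b)) t b.
  by auto_derive => //; rewrite Rmult_1_l.
have := is_derive_comp K _ t d b dK daff.
by rewrite /scal /= /mult /= RmultE mulrC.
Qed.

Lemma jacobian_rank1 {k0} {F : 'cV[R]_k0 -> 'cV[R]_k0} {K : R -> R}
    {y w p : 'cV[R]_k0} {d : R} :
  (forall z, F z = K ((y^T *m z) 0 0) *: w) ->
  is_derive K ((y^T *m p) 0 0) d ->
  jacobian F p = d *: (w *m y^T).
Proof.
move=> FE dK; apply/matrixP => a b; rewrite !mxE big_ord1 !mxE.
have inner_shift t : (y^T *m (p + t *: delta_mx b 0)) 0 0 = (y^T *m p) 0 0 + t * y b 0.
  by rewrite mulmxDr -scalemxAr -colE !mxE.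
rewrite (Derive_ext _ (fun t => K ((y^T *m p) 0 0 + t * y b 0) * w a 0)); last first.
  by move=> t; rewrite FE mxE inner_shift mulrC.
rewrite mulrCA mulrC.
apply: is_derive_unique.
have dKc : is_derive K ((y^T *m p) 0 0 + 0 * y b 0) d by rewrite mul0r addr0.
exact: (@is_derive_scal_l _ R_NormedModule _ _ _ (w a 0) (is_derive_comp_affine dKc)).
Qed.

Lemma is_derive_foldl_fixpoint (I : Type) (g : I -> R -> R) (D : I -> R) (p : R)
    (s : seq I) :
  (forall i, g i p = p) -> (forall i, is_derive (g i) p (D i)) ->
  is_derive (fun t => foldl (fun t i => g i t) t s) p (\prod_(i <- s) D i).
Proof.
move=> gp dg; elim: s => [|i s IH] /=; first by rewrite big_nil; exact: is_derive_id.
have IH' : is_derive (fun t => foldl (fun t i => g i t) t s) (g i p) (\prod_(i <- s) D i).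
  by rewrite gp.
by rewrite big_cons; exact: is_derive_comp IH' (dg i).
Qed.

Lemma foldl_rank1 {k0} {I : Type} (g : I -> R -> R) (xin xout : I -> 'cV[R]_k0)
    (i : I) (s : seq I) (z : 'cV[R]_k0) :
  path (fun a b => (xin b)^T *m xout a == 1%:M) i s ->
  foldl (fun w j => g j (((xin j)^T *m w) 0 0) *: xout j) z (i :: s)
  = foldl (fun t j => g j t) (((xin i)^T *m z) 0 0) (i :: s) *: xout (last i s).
Proof.
elim: s i z => [//|i' s IH] i z /andP[/eqP linked s_path].
move: (IH i' (g i (((xin i)^T *m z) 0 0) *: xout i) s_path) => /= ->.
by rewrite -scalemxAr linked !mxE eqxx mulr1.
Qed.

Lemma cycle_succn_mod_iota n : cycle (fun a b => b == a.+1 %% n)%N (iota 0 n).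
Proof.
case: n => [//|n] /=; apply/(pathP 0%N) => i; rewrite size_rcons size_iota => i_le_n.
rewrite -rcons_cons !nth_rcons /= size_iota i_le_n -/(iota 0 n.+1) (nth_iota _ 0) //.
have [i_lt_n|] := ltnP i n; first by rewrite nth_iota // modn_small.
by rewrite leq_eqVlt ltnNge -ltnS i_le_n orbF => /eqP <-; rewrite eqxx modnn.
Qed.

Lemma fcycle_ordS_enum n : fcycle (@ordS n) (enum 'I_n).
Proof.
have := cycle_succn_mod_iota n; rewrite -val_enum_ord cycle_map.
by apply: sub_cycle => a b /eqP val_b; apply/eqP/val_inj.
Qed.

Lemma enum_ord_cons {n} (i0 : 'I_n) : val i0 = 0%N -> exists s, enum 'I_n = i0 :: s.
Proof.
move=> i0_eq0; case E: (enum 'I_n) => [|a s].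
  by have := mem_enum 'I_n i0; rewrite E.
exists s; congr (_ :: _); apply: val_inj; rewrite i0_eq0.
by have := nth_enum_ord a (leq_ltn_trans (leq0n i0) (ltn_ord i0)); rewrite E.
Qed.

Lemma is_derive_scale_comp_linear (f : R -> R) (c : R) {a t : R} :
  ex_derive f (a * t) ->
  is_derive (fun s : R => c * f (a * s)) t (c * (Derive f (a * t) * a)).
Proof.
move=> df.
suff : is_derive (fun s : R => Rmult c (f (Rmult a s))) t (c * (Derive f (a * t) * a)).
  by [].
by auto_derive => //; rewrite Rmult_1_r !RmultE [a * _]mulrC.
Qed.

(* By definition, [net phi y x u v z = net_gain phi u v ((x^T *m z) 0 0) *: y].
   Arguments of [phi] are elaborated in [R_scope], hence the [Rmult] rewrites
   below. *)
Definition net_gain (phi : R -> R) {k} (u v : 'cV[R]_k) (t : R) : R :=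
  \sum_(j < k) u j 0 * phi (v j 0 * t).

Section TrainedGain.

Variables (phi : R -> R) (k : nat) (u v : 'cV[R]_k) (j : 'I_k).
Hypotheses (u_eq : all_equal u) (v_eq : all_equal v)
  (u_phi_v : u j 0 * phi (v j 0) = k%:R^-1).

Lemma net_gain_all_equal t : net_gain phi u v t = k%:R * u j 0 * phi (v j 0 * t).
Proof.
rewrite /net_gain (eq_bigr (fun=> u j 0 * phi (v j 0 * t))) => [|l _].
  by rewrite sumr_const card_ord -mulrA mulr_natl.
by rewrite (u_eq l j) (v_eq l j).
Qed.

Let k_neq0 : k%:R != 0 :> R.
Proof. by rewrite pnatr_eq0 -lt0n (leq_ltn_trans (leq0n j) (ltn_ord j)). Qed.

Let phi_v_neq0 : phi (v j 0) != 0.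
Proof.
apply: contra_neq (invr_neq0 k_neq0) => phi_v0.
by rewrite -u_phi_v phi_v0 mulr0.
Qed.

Lemma trained_gain_scale : k%:R * u j 0 = (phi (v j 0))^-1.
Proof.
apply: (mulIf phi_v_neq0).
by rewrite mulVf // -mulrA u_phi_v mulfV.
Qed.

Lemma net_gain_trained1 : net_gain phi u v 1 = 1.
Proof. by rewrite net_gain_all_equal Rmult_1_r trained_gain_scale mulVf. Qed.

Lemma is_derive_net_gain_trained : ex_derive phi (v j 0) ->
  is_derive (net_gain phi u v) 1 (deriv1 phi (v j 0) * v j 0 / phi (v j 0)).
Proof.
move=> dphi; have dphi1 : ex_derive phi (v j 0 * 1) by rewrite mulr1.
have := is_derive_scale_comp_linear phi (k%:R * u j 0) dphi1.
rewrite !RmultE mulr1 trained_gain_scale /deriv1 mulrC => dgain.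
by apply: is_derive_ext dgain => t; rewrite net_gain_all_equal trained_gain_scale.
Qed.

End TrainedGain.

Lemma norm2_eq1_trmx_mul k0 (y : 'cV[R]_k0) : norm2 y = 1 -> y^T *m y = 1%:M.
Proof.
rewrite /norm2 => /(congr1 (fun r => r ^+ 2)); rewrite sqr_sqrtr; last first.
  by apply: sumr_ge0 => a _; exact: sqr_ge0.
rewrite expr1n => sum_sq1; apply/matrixP => a b; rewrite !ord1 !mxE -sum_sq1 /=.
by apply: eq_bigr => c _; rewrite !mxE expr2.
Qed.

Theorem theorem4 (phi : R -> R) (k0 k n : nat) (n_gt0 : (0 < n)%N)
  (x : 'I_n -> 'cV[R]_k0)
  (u0 v0 u v : 'I_n -> 'cV[R]_k) :
  (forall z : R, ex_derive phi z) ->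
  (forall z : R, deriv1 phi z <> 0) ->
  (forall i, norm2 (x i) = 1) ->
  (forall i, all_equal (u0 i)) -> (forall i, all_equal (v0 i)) ->
  (forall i, all_equal (u i)) -> (forall i, all_equal (v i)) ->
  (forall i (j : 'I_k), u i j 0 * phi (v i j 0) = k%:R^-1) ->
  (forall i (j : 'I_k),
      ex_RInt (fun z => phi z / deriv1 phi z) (v0 i j 0) (v i j 0) /\
      (u i j 0 ^+ 2 - u0 i j 0 ^+ 2) / 2
        = RInt (fun z => phi z / deriv1 phi z) (v0 i j 0) (v i j 0)) ->
  let f := compose_nets (fun i => net phi (x (ordS i)) (x i) (u i) (v i)) in
  forall j : 'I_k,
    is_top_eigenvalue (jacobian f (x (Ordinal n_gt0)))
      (\prod_(i < n) (deriv1 phi (v i j 0) * v i j 0 / phi (v i j 0))).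
Proof.
(* The gradient-flow conservation law and [phi' <> 0] only serve to reach the
   trained weights; the spectrum depends on them through [u_j phi(v_j) = 1/k]. *)
move=> phi_derivable _ x_norm1 _ _ u_eq v_eq u_phi_v _ f j.
set i0 := Ordinal n_gt0.
have x_unit i : (x i)^T *m x i = 1%:M by exact: norm2_eq1_trmx_mul.
pose g i := net_gain phi (u i) (v i).
have [s enumE] := enum_ord_cons i0 erefl.
have /andP[ordS_path /eqP ordS_last] :
    path (frel (@ordS n)) i0 s && (ordS (last i0 s) == i0).
  by rewrite -rcons_path; have := fcycle_ordS_enum n; rewrite enumE.
pose K t := foldl (fun t i => g i t) t (i0 :: s).
have fE z : f z = K (((x i0)^T *m z) 0 0) *: x i0.
  rewrite /f /compose_nets enumE (foldl_rank1 g x (fun i => x (ordS i))).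
    by congr (_ *: x _).
  by apply: sub_path ordS_path => a b /eqP <-; rewrite x_unit.
have dK : is_derive K (((x i0)^T *m x i0) 0 0)
    (\prod_(i < n) (deriv1 phi (v i j 0) * v i j 0 / phi (v i j 0))).
  rewrite x_unit mxE eqxx -big_enum enumE.
  apply: is_derive_foldl_fixpoint => i.
    exact: net_gain_trained1 (u_eq i) (v_eq i) (u_phi_v i j).
  exact: is_derive_net_gain_trained (u_eq i) (v_eq i) (u_phi_v i j) (phi_derivable _).
rewrite (jacobian_rank1 fE dK).
exact: is_top_eigenvalue_scale_rank1.
Qed.
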